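(* Let $n\ge 1$, let $w_n\ge w_{n-1}\ge\dots\ge w_1>0$ be real weights and let $B\in\{1,\dots,n\}$. Consider minimising the fitness function \[ f(x)=\sum_{i=1}^n w_i x_i+\max\{0,\,B-b(x)\}\cdot(n w_n+1),\qquad b(x)=\sum_{i=1}^n x_i, \] over $x\in\{0,1\}^n$ with either RLS or the (1+1) EA (both defined in the context). Starting with an arbitrary initial search point, the expected number of iterations until the algorithm's current search point is feasible (i.e. satisfies $b(x)\ge B$) is $O\!\left(n\log\frac{n}{n-B}\right)$, where the constant hidden in the $O$-notation does not depend on $n$, the weights, or $B$.
   Context: Problem: minimise $f_{\mathrm{obj}}(x)=\sum_{i=1}^n w_ix_i$ over $x=x_n\cdots x_1\in\{0,1\}^n$ subject to the uniform constraint $x_1+\dots+x_n\ge B$; a search point is feasible if it satisfies the constraint. The algorithms use the penalised fitness $f$ given in the claim. (1+1) EA: maintain a current search point $x_t$ ($x_0$ the initial point); in each iteration create $x'$ by flipping each bit of $x_t$ independently with probability $1/n$; set $x_{t+1}=x'$ if $f(x')\le f(x_t)$, otherwise $x_{t+1}=x_t$. RLS: maintain $x_t$; in each iteration choose $b\in\{1,2\}$ uniformly at random, create $x'$ by flipping $b$ distinct bits of $x_t$ chosen uniformly at random; set $x_{t+1}=x'$ if $f(x')\le f(x_t)$, otherwise $x_{t+1}=x_t$. *)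

From HB Require Import structures.
From mathcomp Require Import all_boot all_order all_algebra.
From mathcomp Require Import reals exp.
Set Implicit Arguments. Unset Strict Implicit. Unset Printing Implicit Defensive.
Import Order.TTheory GRing.Theory Num.Theory.
Local Open Scope ring_scope.

Inductive algo := EA | RLS.

(* Search points x = x_n ... x_1 in {0,1}^n; bit x_i is [x (i-1)]. *)
Definition bitstr (n : nat) := {ffun 'I_n -> bool}.

Definition ones (n : nat) (x : bitstr n) : nat := (\sum_(i < n) (x i : nat))%N.

Definition feasible (n B : nat) (x : bitstr n) : bool := (B <= ones x)%N.

Section Model.
Variable R : realType.

(* Weights w_1..w_n are given as [w 0 .. w (n-1)]; so w_n = w n.-1.
   max{0, B - b(x)} is the truncated natural subtraction (B - b(x))%N. *)
Definition fitness (n : nat) (w : nat -> R) (B : nat) (x : bitstr n) : R :=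
  \sum_(i < n) w i * (x i : nat)%:R
  + (maxn 0 (B - ones x))%:R * (n%:R * w n.-1 + 1).

Definition hamming (n : nat) (x y : bitstr n) : nat := #|[set i | x i != y i]|.

Definition mut_prob (a : algo) (n : nat) (x y : bitstr n) : R :=
  match a with
  | EA => \prod_(i < n) (if x i == y i then 1 - n%:R^-1 else n%:R^-1)
  | RLS => 2^-1 * ((hamming x y == 1%N)%:R / n%:R)
         + 2^-1 * ((hamming x y == 2%N)%:R / 'C(n, 2)%:R)
  end.

Definition step_prob (a : algo) (n : nat) (w : nat -> R) (B : nat)
  (x z : bitstr n) : R :=
  \sum_(y : bitstr n) mut_prob a x y *
     ((if fitness w B y <= fitness w B x then y else x) == z)%:R.

(* surv a w B x0 t z = Pr[ x_0, ..., x_t all infeasible and x_t = z ]. *)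
Fixpoint surv (a : algo) (n : nat) (w : nat -> R) (B : nat) (x0 : bitstr n)
  (t : nat) : {ffun bitstr n -> R} :=
  match t with
  | 0 => [ffun z => ((z == x0) && ~~ feasible B z)%:R]
  | t'.+1 => [ffun z => (~~ feasible B z)%:R *
                 \sum_(x : bitstr n) surv a w B x0 t' x * step_prob a w B x z]
  end.

(* Pr[T > t], where T = first iteration t with x_t feasible. *)
Definition surv_prob (a : algo) (n : nat) (w : nat -> R) (B : nat)
  (x0 : bitstr n) (t : nat) : R := \sum_(z : bitstr n) surv a w B x0 t z.

(* Partial sums of E[T] = sum_{t >= 0} Pr[T > t]; E[T] <= c iff all
   partial sums are <= c. *)
Definition exp_hit_partial (a : algo) (n : nat) (w : nat -> R) (B : nat)
  (x0 : bitstr n) (N : nat) : R := \sum_(t < N) surv_prob a w B x0 t.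

End Model.

From HB Require Import structures.
From mathcomp Require Import all_boot all_order all_algebra.
From mathcomp Require Import reals exp sequences.
From mathcomp Require Import ring lra zify.
(* Additive drift.  While x is infeasible, the penalty term dominates the linear
   part of f, so the elitist algorithm never loses a one-bit, and it gains one as
   soon as the mutation flips exactly one of the n - b(x) zero bits, which for
   each such bit happens with probability at least 1/(2en).  Hence the potential
   2en (1/(n-B+1) + ... + 1/(n-b(x))) drops by at least 1 in expectation per
   step, so the expected hitting time is at most its initial value, which is
   at most 2en ln(n/(n-B)). *)

Set Implicit Arguments.
Unset Strict Implicit.
Unset Printing Implicit Defensive.

Import Order.TTheory GRing.Theory Num.Theory.
Local Open Scope ring_scope.

Section BitStrings.
Variable n : nat.
Implicit Types x y : bitstr n.

Definition flip x (i : 'I_n) : bitstr n :=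
  [ffun j => if j == i then ~~ x j else x j].

Lemma ones_card x : ones x = #|[set i | x i]|.
Proof.
by rewrite /ones -sum1dep_card [RHS]big_mkcond; apply: eq_bigr => i _; case: (x i).
Qed.

Lemma card_zeros x : #|[set i | ~~ x i]| = (n - ones x)%N.
Proof.
have -> : [set i | ~~ x i] = ~: [set i | x i] by apply/setP => i; rewrite !inE.
by rewrite ones_card cardsCs setCK card_ord.
Qed.

Lemma ones_flip x i : ~~ x i -> ones (flip x i) = (ones x).+1.
Proof.
move=> xi; rewrite /ones (bigD1 i) //= [in RHS](bigD1 i) //= ffunE eqxx (negbTE xi).
by congr _.+1; apply: eq_bigr => j /negbTE ji; rewrite ffunE ji.
Qed.

Lemma flip_inj x : injective (flip x).
Proof.
move=> i j /ffunP /(_ i); rewrite !ffunE eqxx; case: (i =P j) => // _.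
by case: (x i).
Qed.

Lemma hamming_flip x i : hamming x (flip x i) = 1%N.
Proof.
rewrite /hamming (_ : [set j | x j != flip x i j] = [set i]) ?cards1 //.
by apply/setP => j; rewrite !inE ffunE; case: (j == i); case: (x j).
Qed.

End BitStrings.

Section Mutation.
Variables (R : realType) (n : nat).
Implicit Types x y : bitstr n.

Lemma sum_hamming_eq x k : \sum_y ((hamming x y == k)%:R : R) = 'C(n, k)%:R.
Proof.
pose toggle (S : {set 'I_n}) : bitstr n := [ffun i => x i (+) (i \in S)].
pose diff y : {set 'I_n} := [set i | x i != y i].
have diff_toggle S : diff (toggle S) = S.
  by apply/setP => i; rewrite inE ffunE; case: (x i); case: (i \in S).
have toggle_diff y : toggle (diff y) = y.
  by apply/ffunP => i; rewrite ffunE inE; case: (x i); case: (y i).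
rewrite (reindex toggle); last by exists diff => [S _|y _].
under eq_bigr => S _ do rewrite /hamming -/(diff (toggle S)) diff_toggle.
rewrite -natr_sum -[n in 'C(n, _)]card_ord -card_draws -sum1dep_card; congr _%:R.
by rewrite [RHS]big_mkcond; apply: eq_bigr => S _; case: (#|S| == k).
Qed.

Lemma invn_le1 : n%:R^-1 <= 1 :> R.
Proof. by case: n => [|m]; rewrite ?invr0 ?ler01 // invf_le1 ?ler1n. Qed.

Lemma mut_prob_ge0 a x y : 0 <= mut_prob R a x y.
Proof.
case: a => /=.
  by apply: prodr_ge0 => i _; case: ifP; rewrite ?subr_ge0 ?invn_le1 ?invr_ge0.
by apply: addr_ge0; rewrite mulr_ge0 ?invr_ge0 ?divr_ge0.
Qed.

Lemma mut_prob_sum a x : (1 < n)%N -> \sum_y mut_prob R a x y = 1.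
Proof.
move=> n_gt1; case: a => /=.
  rewrite -(bigA_distr_bigA (fun i b => if x i == b then 1 - n%:R^-1 else n%:R^-1 : R)).
  by apply: big1 => i _; rewrite big_bool; case: (x i) => /=; ring.
rewrite big_split /= -!mulr_sumr -!mulr_suml !sum_hamming_eq bin1.
rewrite !divff ?pnatr_eq0 -?lt0n ?bin_gt0 //; [lra | lia].
Qed.

Lemma expRN1_le_pow : expR (-1) <= (1 - n%:R^-1) ^+ n.-1 :> R.
Proof.
case: n => [|[|m]] /=; try by rewrite expr0 expR_le1 lerN10.
have m_gt0 : 0 < m.+1%:R :> R by rewrite ltr0n.
have -> : 1 - m.+2%:R^-1 = (1 + m.+1%:R^-1)^-1 :> R.
  by rewrite -[m.+2]addn1 natrD; field; rewrite !gt_eqF ?ltr_wpDr ?addr_gt0 ?invr_gt0.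
rewrite expRN exprVn lef_pV2 ?posrE ?expR_gt0 ?exprn_gt0 ?addr_gt0 ?invr_gt0 //.
rewrite -[X in expR X](mulfV (lt0r_neq0 m_gt0)) expRM_natl.
by rewrite lerXn2r ?nnegrE ?addr_ge0 ?invr_ge0 ?expR_ge0 // expR_ge1Dx.
Qed.

Lemma mut_prob_flip a x i : (2 * expR 1 * n%:R)^-1 <= mut_prob R a x (flip x i).
Proof.
have n_gt0 : 0 < n%:R :> R by rewrite ltr0n (leq_ltn_trans (leq0n i) (ltn_ord i)).
have einv_ge0 : 0 <= (expR 1)^-1 :> R by rewrite invr_ge0 expR_ge0.
have einv_le1 : (expR 1)^-1 <= 1 :> R by rewrite invf_le1 ?expR_gt0 // ltW // expR_gt1.
rewrite !invfM [leLHS]mulrC; case: a => /=.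
  rewrite (bigD1 i) //= ffunE eqxx (_ : (x i == ~~ x i) = false); last by case: (x i).
  rewrite (eq_bigr (fun _ => 1 - n%:R^-1)); last first.
    by move=> j ji; rewrite ffunE (negbTE ji) eqxx.
  rewrite prodr_const cardC1 card_ord; apply: ler_wpM2l; first by rewrite invr_ge0 ltW.
  by apply: le_trans expRN1_le_pow; rewrite expRN; lra.
rewrite hamming_flip /= mul0r mulr0 addr0 mul1r mulrCA mulrC.
have : 0 <= n%:R^-1 :> R by rewrite invr_ge0 ltW.
nra.
Qed.

Lemma mut_prob_more_ones a x :
  (n - ones x)%:R / (2 * expR 1 * n%:R)
    <= \sum_y mut_prob R a x y * (ones x < ones y)%:R.
Proof.
set Z := [set i | ~~ x i].
rewrite -card_zeros mulr_natl -sumr_const.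
apply: (@le_trans _ _
  (\sum_(y in flip x @: Z) mut_prob R a x y * (ones x < ones y)%:R)).
  rewrite big_imset /=; last by move=> i j _ _; apply: flip_inj.
  apply: ler_sum => i; rewrite inE => xi.
  by rewrite ones_flip // ltnSn mulr1 mut_prob_flip.
rewrite [leRHS](bigID (mem (flip x @: Z))) /= lerDl.
by apply: sumr_ge0 => y _; rewrite mulr_ge0 ?ler0n ?mut_prob_ge0.
Qed.

End Mutation.

Section Selection.
Variables (R : realType) (n : nat) (w : nat -> R) (B : nat).
Implicit Types x y : bitstr n.

Definition select x y : bitstr n :=
  if fitness w B y <= fitness w B x then y else x.

Lemma step_prob_ge0 a x z : 0 <= step_prob a w B x z.
Proof. by apply: sumr_ge0 => y _; rewrite mulr_ge0 ?ler0n ?mut_prob_ge0. Qed.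

Lemma step_prob_expectation a x (f : bitstr n -> R) :
  \sum_z step_prob a w B x z * f z = \sum_y mut_prob R a x y * f (select x y).
Proof.
under eq_bigr => z _ do rewrite mulr_suml.
rewrite exchange_big /=; apply: eq_bigr => y _.
rewrite (bigD1 (select x y)) //= eqxx mulr1 big1 ?addr0 // => z zs.
by rewrite eq_sym (negbTE zs) mulr0 mul0r.
Qed.

Hypothesis w_mono : forall i j : nat, (i <= j)%N -> (j < n)%N -> w i <= w j.
Hypothesis w_gt0 : forall i : nat, (i < n)%N -> 0 < w i.

Lemma fitness_lt_more_ones x y :
  (ones x < B)%N -> (ones x < ones y)%N -> fitness w B y < fitness w B x.
Proof.
set W := n%:R * w n.-1; pose lin (z : bitstr n) := \sum_(i < n) w i * (z i : nat)%:R.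
have lin_ge0 z : 0 <= lin z.
  by apply: sumr_ge0 => i _; rewrite mulr_ge0 ?ler0n // ltW ?w_gt0.
have lin_le z : lin z <= W.
  rewrite /W mulr_natl -[n in _ *+ n]card_ord -sumr_const; apply: ler_sum => i _.
  have i_lt := ltn_ord i.
  case: (z i); rewrite ?mulr1 ?mulr0; first by apply: w_mono; lia.
  apply/ltW/w_gt0; lia.
move=> xB xy; rewrite /fitness !max0n -/W -/(lin x) -/(lin y).
(* one unit of penalty, n w_n + 1, outweighs the whole linear part *)
have gap : (B - ones y)%:R + 1 <= (B - ones x)%:R :> R.
  by rewrite -[1]/(1%N%:R) -natrD ler_nat; lia.
have W_ge0 := le_trans (lin_ge0 x) (lin_le x).
have := ler_wpM2r (addr_ge0 W_ge0 ler01) gap.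
have := lin_ge0 x; have := lin_le y; nra.
Qed.

Lemma select_more_ones x y :
  (ones x < B)%N -> (ones x < ones y)%N -> select x y = y.
Proof. by move=> xB xy; rewrite /select (ltW (fitness_lt_more_ones xB xy)). Qed.

Lemma ones_select x y : (ones x < B)%N -> (ones x <= ones (select x y))%N.
Proof.
rewrite /select => xB; case: ifP => // fit_yx; rewrite leqNgt; apply/negP => yx.
by have := fitness_lt_more_ones (ltn_trans yx xB) yx; rewrite ltNge fit_yx.
Qed.

End Selection.

Section AdditiveDrift.
Variables (R : realType) (n : nat) (a : algo) (w : nat -> R) (B : nat).
Variables (x0 : bitstr n) (g : bitstr n -> R).
Hypothesis g_ge0 : forall x, 0 <= g x.
Hypothesis g_drift : forall x, ~~ feasible B x ->
  \sum_z step_prob a w B x z * g z <= g x - 1.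

Lemma surv_ge0 t z : 0 <= surv a w B x0 t z.
Proof.
elim: t z => [|t IH] z /=; rewrite ffunE ?ler0n // mulr_ge0 ?ler0n //.
by apply: sumr_ge0 => x _; rewrite mulr_ge0 ?IH ?step_prob_ge0.
Qed.

Lemma surv_feasible t z : feasible B z -> surv a w B x0 t z = 0.
Proof. by case: t => [|t] /= fz; rewrite ffunE fz ?andbF ?mul0r. Qed.

(* E[g(x_t); T > t] *)
Definition surv_potential t := \sum_z surv a w B x0 t z * g z.

Lemma surv_potential_ge0 t : 0 <= surv_potential t.
Proof. by apply: sumr_ge0 => z _; rewrite mulr_ge0 ?surv_ge0. Qed.

Lemma surv_potential_step t :
  surv_potential t.+1 + surv_prob a w B x0 t <= surv_potential t.
Proof.
rewrite -lerBrDr; apply: (@le_trans _ _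
  (\sum_z (\sum_x surv a w B x0 t x * step_prob a w B x z) * g z)).
  apply: ler_sum => z _; rewrite ffunE; apply: ler_wpM2r => //.
  apply: ler_piMl; last by rewrite lern1 leq_b1.
  by apply: sumr_ge0 => x _; rewrite mulr_ge0 ?surv_ge0 ?step_prob_ge0.
under eq_bigr => z _ do rewrite mulr_suml.
rewrite exchange_big /= /surv_potential /surv_prob -sumrB; apply: ler_sum => x _.
under eq_bigr => z _ do rewrite -mulrA.
rewrite -mulr_sumr -[X in _ <= _ - X]mulr1 -mulrBr.
case fx: (feasible B x); first by rewrite surv_feasible // !mul0r.
by apply: ler_wpM2l; [exact: surv_ge0 | apply: g_drift; rewrite fx].
Qed.

Lemma exp_hit_partial_le_potential N : exp_hit_partial a w B x0 N <= g x0.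
Proof.
have surv_potential0 : surv_potential 0 <= g x0.
  rewrite /surv_potential (bigD1 x0) //= ffunE eqxx big1 ?addr0; last first.
    by move=> z zx; rewrite ffunE (negbTE zx) mul0r.
  by case: (feasible B x0); rewrite ?mul0r ?mul1r.
suff : exp_hit_partial a w B x0 N + surv_potential N <= surv_potential 0.
  by have := surv_potential_ge0 N; lra.
elim: N => [|N IH]; first by rewrite /exp_hit_partial big_ord0 add0r.
rewrite /exp_hit_partial big_ord_recr /= -/(exp_hit_partial _ _ _ _ N).
by have := surv_potential_step N; lra.
Qed.

End AdditiveDrift.

Lemma inv_succ_le_ln_diff (R : realType) i : (0 < i)%N ->
  (i.+1%:R : R)^-1 <= ln i.+1%:R - ln i%:R.
Proof.
move=> i_gt0; have Si_gt0 : 0 < i.+1%:R :> R by rewrite ltr0n.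
have inv_lt1 : (i.+1%:R : R)^-1 < 1 by rewrite invf_lt1 // ltr1n ltnS.
have := @le_ln1Dx R (- i.+1%:R^-1); rewrite ltrN2 => /(_ inv_lt1).
rewrite (_ : 1 - i.+1%:R^-1 = i%:R / i.+1%:R :> R); last first.
  by rewrite -[i.+1]addn1 natrD; field; rewrite natr1 pnatr_eq0.
by rewrite ln_div ?posrE ?ltr0n // => ln_le; rewrite -lerN2 opprB.
Qed.

Lemma harmonic_sum_le_ln (R : realType) l m : (0 < l)%N -> (l <= m)%N ->
  \sum_(l <= i < m) (i.+1%:R : R)^-1 <= ln (m%:R / l%:R).
Proof.
move=> l_gt0 lm; rewrite ln_div ?posrE ?ltr0n ?(leq_trans l_gt0) //.
rewrite -(telescope_sumr (fun i => ln (i%:R : R))) //.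
apply: ler_sum_nat => i /andP [li _].
exact/inv_succ_le_ln_diff/(leq_trans l_gt0 li).
Qed.

Section HarmonicPotential.
Variables (R : realType) (n B : nat).

Definition harmonic_potential k : R := \sum_(n - B <= i < n - k) (i.+1%:R)^-1.

Lemma harmonic_potential_ge0 k : 0 <= harmonic_potential k.
Proof. by apply: sumr_ge0 => i _; rewrite invr_ge0 ler0n. Qed.

Lemma harmonic_potential_anti k k' :
  (k <= k')%N -> harmonic_potential k' <= harmonic_potential k.
Proof.
move=> kk'; rewrite /harmonic_potential.
case: (leqP (n - B) (n - k')) => [Bk'|k'B].
  rewrite (big_cat_nat Bk' (_ : n - k' <= n - k)%N) /=; last lia.
  by rewrite lerDl; apply: sumr_ge0 => i _; rewrite invr_ge0 ler0n.
by rewrite [leLHS]big_geq ?harmonic_potential_ge0 // ltnW.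
Qed.

Lemma harmonic_potentialS k : (k < B)%N -> (B <= n)%N ->
  harmonic_potential k = harmonic_potential k.+1 + (n - k)%:R^-1.
Proof.
move=> kB Bn; rewrite /harmonic_potential (_ : (n - k)%N = (n - k.+1).+1); last lia.
by rewrite big_nat_recr //=; lia.
Qed.

Definition hitting_potential (x : bitstr n) : R :=
  2 * expR 1 * n%:R * harmonic_potential (ones x).

Lemma hitting_potential_ge0 x : 0 <= hitting_potential x.
Proof. by rewrite mulr_ge0 ?harmonic_potential_ge0 // !mulr_ge0 ?expR_ge0. Qed.

Lemma hitting_potential_le_ln x : (B < n)%N ->
  hitting_potential x <= 2 * expR 1 * n%:R * ln (n%:R / (n - B)%:R).
Proof.
move=> Bn; apply: ler_wpM2l; first by rewrite !mulr_ge0 ?expR_ge0.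
apply: le_trans (harmonic_potential_anti (leq0n _)) _.
by rewrite /harmonic_potential subn0 harmonic_sum_le_ln //; lia.
Qed.

End HarmonicPotential.

Section HarmonicDrift.
Variables (R : realType) (n : nat) (w : nat -> R) (B : nat).
Hypothesis w_mono : forall i j : nat, (i <= j)%N -> (j < n)%N -> w i <= w j.
Hypothesis w_gt0 : forall i : nat, (i < n)%N -> 0 < w i.
Hypotheses (B_gt0 : (0 < B)%N) (B_lt_n : (B < n)%N).

Lemma hitting_potential_drift a (x : bitstr n) : ~~ feasible B x ->
  \sum_(z : bitstr n) step_prob a w B x z * hitting_potential R B z
    <= hitting_potential R B x - 1.
Proof.
rewrite /feasible -ltnNge => xB; set k := ones x.
set c : R := 2 * expR 1 * n%:R.
have c_gt0 : 0 < c by rewrite !mulr_gt0 ?expR_gt0 ?ltr0n //; lia.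
have nk_gt0 : 0 < (n - k)%:R :> R by rewrite ltr0n; lia.
set d := c / (n - k)%:R.
have pot_select y : hitting_potential R B (select w B x y)
    <= hitting_potential R B x - d * (k < ones y)%:R.
  rewrite /hitting_potential -/c -/k.
  case: (ltnP k (ones y)) => [ky|_]; rewrite ?mulr1 ?mulr0 ?subr0.
    rewrite select_more_ones // (harmonic_potentialS R xB (ltnW B_lt_n)).
    by rewrite mulrDr addrK ler_pM2l // harmonic_potential_anti.
  by rewrite ler_pM2l // harmonic_potential_anti // ones_select.
rewrite step_prob_expectation.
apply: (@le_trans _ _ (\sum_y mut_prob R a x y *
  (hitting_potential R B x - d * (k < ones y)%:R))).
  by apply: ler_sum => y _; apply: ler_wpM2l; rewrite ?mut_prob_ge0 ?pot_select.
under eq_bigr => y _ do rewrite mulrBr.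
rewrite sumrB -mulr_suml mut_prob_sum ?mul1r ?lerD2l ?lerN2; last lia.
under eq_bigr => y _ do rewrite mulrCA.
rewrite -mulr_sumr.
apply: le_trans _ (ler_wpM2l (ltW (divr_gt0 c_gt0 nk_gt0)) (mut_prob_more_ones R a x)).
by rewrite -/c -/k [leRHS](_ : _ = 1) //; field; rewrite !gt_eqF.
Qed.

End HarmonicDrift.

Theorem lemma2 (R : realType) :
  exists C : R, 0 < C /\
  forall (n : nat) (w : nat -> R) (B : nat) (a : algo) (x0 : bitstr n),
    (1 <= n)%N ->
    (forall i j : nat, (i <= j)%N -> (j < n)%N -> w i <= w j) ->
    (forall i : nat, (i < n)%N -> 0 < w i) ->
    (1 <= B)%N -> (B < n)%N ->
    forall N : nat,
      exp_hit_partial a w B x0 N <= C * n%:R * ln (n%:R / (n - B)%:R).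
Proof.
exists (2 * expR 1); split; first by rewrite mulr_gt0 ?expR_gt0.
move=> n w B a x0 _ w_mono w_gt0 B_gt0 B_lt_n N.
have drift := hitting_potential_drift w_mono w_gt0 B_gt0 B_lt_n a.
apply: le_trans _ (hitting_potential_le_ln R x0 B_lt_n).
exact: exp_hit_partial_le_potential (hitting_potential_ge0 R B) drift N.
Qed.
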